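(* Let $G$ be a graph, let $v$ be a leaf (vertex of degree $1$) of $G$, and let $N(v)=\{w\}$. Then $$\phi(G)\le \sum_{u\in N(w)\setminus\{v\}}\phi\big(G-(N[w]\cup N[u])\big)+\phi(G-v-w)+\phi(G-N[w]).$$
   Context: Graphs are finite and simple. $N(v)$ is the neighborhood of $v$, $N[v]=N(v)\cup\{v\}$, and $G-S$ is the subgraph induced by $V(G)\setminus S$. A subset $F$ of vertices is a dissociation set if $G[F]$ has maximum degree at most $1$; a maximal dissociation set is one not properly contained in another dissociation set; $\phi(G)$ is the number of maximal dissociation sets of $G$, with $\phi=1$ for the graph with no vertices. *)

(* A finite simple graph is a symmetric irreflexive relation
   e on a finite vertex type T. Induced subgraphs G[W] are represented by a
   vertex subset W : {set T} (so G - S is G[~: S]). *)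
From mathcomp Require Import all_boot.
Set Implicit Arguments. Unset Strict Implicit. Unset Printing Implicit Defensive.

Section Dissoc.
Variable T : finType.
Variable e : rel T.

Definition nbr (v : T) : {set T} := [set u | e v u].
Definition cnbr (v : T) : {set T} := v |: nbr v.

Definition dissoc (F : {set T}) : bool :=
  [forall x in F, #|F :&: nbr x| <= 1].

Definition maxdissoc (W F : {set T}) : bool :=
  [&& F \subset W, dissoc F &
      [forall F' : {set T},
         [&& F' \subset W, dissoc F' & F \subset F'] ==> (F' == F)]].

(* phi(G[W]) = number of maximal dissociation sets of G[W];
   equals 1 when W is empty (only the empty set). *)
Definition phi (W : {set T}) : nat := #|[set F : {set T} | maxdissoc W F]|.
End Dissoc.

From mathcomp Require Import all_boot.

Set Implicit Arguments.
Unset Strict Implicit.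
Unset Printing Implicit Defensive.

(* Let v be a leaf of G with N(v) = {w} and let F be a maximal dissociation
   set of G.  Either (a) v, w are both in F; or (b) w is in F, v is not, and w
   has a neighbour u in F (maximality forbids adding v); or (c) w is not in F,
   and then v is in F (otherwise v could be added).  In each case F splits as
   F = F' :|: B with B in {v,w}, {w,u} or {v}, and F' = F :\: B is a maximal
   dissociation set of G - C, where C = N[w], N[w] :|: N[u], resp. {v,w}
   contains B together with all neighbours of B.  Hence every maximal
   dissociation set of G lies in the image of one of the maps F' |-> F' :|: B,
   which bounds phi(G) by the sum in the statement. *)

Section DissociationSets.
Variable T : finType.
Variable e : rel T.
Hypothesis e_sym : symmetric e.

Lemma dissocP (F : {set T}) :
  reflect (forall x y z, x \in F -> y \in F -> z \in F -> e x y -> e x z -> y = z)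
          (dissoc e F).
Proof.
apply: (iffP forall_inP) => H.
- move=> x y z xF yF zF exy exz; have /card_le1_eqP := H x xF.
  by apply; rewrite !inE ?xF ?yF ?zF ?exy ?exz.
- move=> x xF; apply/card_le1_eqP => y z.
  rewrite !inE => /andP[yF exy] /andP[zF exz]; exact: (H x).
Qed.

Lemma dissoc_sub (A B : {set T}) : A \subset B -> dissoc e B -> dissoc e A.
Proof.
move=> /subsetP sAB /dissocP H; apply/dissocP => x y z xA yA zA.
by apply: H; apply: sAB.
Qed.

Lemma dissocU (A B : {set T}) : dissoc e A -> dissoc e B ->
  (forall a b, a \in A -> b \in B -> ~~ e a b) -> dissoc e (A :|: B).
Proof.
move=> /dissocP HA /dissocP HB noAB; apply/dissocP => x y z.
rewrite !inE => /orP[xA|xB] /orP[yA|yB] /orP[zA|zB] exy exz;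
  try (by apply: (HA x)); try (by apply: (HB x));
  try (by move: (noAB _ _ xA yB); rewrite exy);
  try (by move: (noAB _ _ xA zB); rewrite exz);
  try (by move: (noAB _ _ yA xB); rewrite e_sym exy);
  try (by move: (noAB _ _ zA xB); rewrite e_sym exz).
Qed.

Lemma maxdissocP (W F : {set T}) :
  maxdissoc e W F <->
  [/\ F \subset W, dissoc e F &
      forall x, x \in W -> x \notin F -> ~~ dissoc e (x |: F)].
Proof.
split.
- case/and3P => sFW dF /forallP H; split => // x xW xF; apply/negP => dxF.
  have := H (x |: F); rewrite dxF subsetUr andbT subUset sub1set xW sFW.
  by move=> /eqP E; move: xF; rewrite -E setU11.
- case=> sFW dF H; apply/and3P; split => //; apply/forallP => F'.
  apply/implyP => /and3P[sF'W dF' sFF']; rewrite eqEsubset sFF' andbT.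
  apply/subsetP => x xF'; apply/negPn/negP => xF.
  have := H x (subsetP sF'W x xF') xF; rewrite (@dissoc_sub (x |: F) F') //.
  by rewrite subUset sub1set xF' sFF'.
Qed.

(* A vertex of G - C
   extending F :\: B would extend F, since it is not adjacent to B. *)
Lemma maxdissoc_restrict (F B C : {set T}) :
  maxdissoc e setT F -> B \subset F -> F :&: C \subset B ->
  B \subset C -> (forall b, b \in B -> nbr e b \subset C) ->
  maxdissoc e (~: C) (F :\: B).
Proof.
move=> /maxdissocP [_ dF mF] sBF sFCB sBC nbrBC.
have offB x : x \in ~: C -> x \notin B.
  by rewrite inE; apply: contra => /(subsetP sBC).
have nonadj a b : a \in ~: C -> b \in B -> ~~ e a b.
  move=> + bB; rewrite inE e_sym; apply: contra => eba.
  by rewrite (subsetP (nbrBC b bB)) // inE.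
apply/maxdissocP; split.
- apply/subsetP => x; rewrite !inE => /andP[xB xF]; apply: contra xB => xC.
  by apply: (subsetP sFCB); rewrite inE xF.
- exact: dissoc_sub (subsetDl F B) dF.
- move=> x xC xFB; apply/negP => dx.
  have xF : x \notin F by move: xFB; rewrite !inE (negbTE (offB x xC)).
  have := mF x (in_setT x) xF.
  have -> : x |: F = (x |: (F :\: B)) :|: B.
    apply/setP => y; rewrite !inE; case yB: (y \in B) => /=.
      by rewrite (subsetP sBF y yB) !orbT.
    by rewrite orbF.
  rewrite dissocU //; first exact: dissoc_sub dF.
  move=> a b; rewrite in_setU1 => /orP[/eqP->|aFB]; first exact: nonadj.
  apply: nonadj; move: aFB; rewrite !inE => /andP[aB aF].
  by apply: contra aB => aC; apply: (subsetP sFCB); rewrite inE aF aC.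
Qed.

Lemma cnbr_self (x : T) : x \in cnbr e x.
Proof. exact: setU11. Qed.

Lemma dissoc_edge_closed (F : {set T}) (x y : T) :
  dissoc e F -> x \in F -> y \in F -> e x y ->
  F :&: (cnbr e x :|: cnbr e y) \subset [set x; y].
Proof.
move=> /dissocP dF xF yF exy; apply/subsetP => z.
rewrite /cnbr /nbr !inE => /andP[zF /orP[/orP[->//|exz]|/orP[->|eyz]]];
  rewrite ?orbT //.
- by rewrite (dF x y z) ?eqxx ?orbT.
- by rewrite (dF y x z) ?eqxx // e_sym.
Qed.

Lemma dissoc_pair (a b : T) : irreflexive e -> dissoc e [set a; b].
Proof.
move=> e_irr; apply/dissocP => x y z.
by rewrite !inE => /orP[]/eqP-> /orP[]/eqP-> /orP[]/eqP->; rewrite ?e_irr.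
Qed.

Definition extensions (B C : {set T}) : {set {set T}} :=
  (fun F' => F' :|: B) @: [set F' | maxdissoc e (~: C) F'].

Lemma card_extensions (B C : {set T}) : #|extensions B C| <= phi e (~: C).
Proof. exact: leq_imset_card. Qed.

Lemma mem_extensions (F B C : {set T}) :
  maxdissoc e setT F -> B \subset F -> F :&: C \subset B ->
  B \subset C -> (forall b, b \in B -> nbr e b \subset C) ->
  F \in extensions B C.
Proof.
move=> mF sBF sFCB sBC nbrBC.
have -> : F = (F :\: B) :|: B.
  by rewrite setUC setDE setUIr setUCr setIT (setUidPr sBF).
by apply: imset_f; rewrite inE maxdissoc_restrict.
Qed.

Lemma card_bigcup_le (I : finType) (P : pred I) (A : I -> {set T}) :
  #|\bigcup_(i | P i) A i| <= \sum_(i | P i) #|A i|.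
Proof.
elim/big_rec2: _ => [|i X n _ IH]; first by rewrite cards0.
by rewrite cardsU (leq_trans (leq_subr _ _)) // leq_add2l.
Qed.

End DissociationSets.

Section LeafBranching.
Variable T : finType.
Variable e : rel T.
Hypothesis e_sym : symmetric e.
Hypothesis e_irr : irreflexive e.
Variables v w : T.
Hypothesis leaf : nbr e v = [set w].

Lemma leaf_nbrE (x : T) : e v x = (x == w).
Proof. by have := f_equal (fun s : {set T} => x \in s) leaf; rewrite !inE. Qed.

Lemma leaf_edge : e w v.
Proof. by rewrite e_sym leaf_nbrE. Qed.

(* A maximal dissociation set avoiding the leaf v must contain w together
   with a neighbour of w; otherwise v could be added to it. *)
Lemma leaf_excluded (F : {set T}) : maxdissoc e setT F -> v \notin F ->
  w \in F /\ exists2 u, u \in F & e w u.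
Proof.
case/maxdissocP => _ dF mF vF; have ndvF := mF v (in_setT v) vF.
have wF : w \in F.
  apply: contraNT ndvF => wF; apply: dissocU => //.
    exact: dissoc_sub (subsetUl _ [set w]) (dissoc_pair _ _ e_irr).
  move=> a b; rewrite inE => /eqP-> bF; rewrite leaf_nbrE.
  by apply: contraNneq wF => <-.
split=> //; have : [exists u in F, e w u].
  apply: contraNT ndvF => /exists_inPn noNbr.
  rewrite -(setD1K wF) setUA; apply: dissocU => //.
  - exact: dissoc_pair.
  - exact: dissoc_sub (subD1set F w) dF.
  move=> a b; rewrite !inE => /orP[]/eqP-> /andP[bw bF]; last exact: noNbr.
  by rewrite leaf_nbrE.
by case/exists_inP=> u uF ewu; exists u.
Qed.

Lemma branch_leaf_edge (F : {set T}) : maxdissoc e setT F ->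
  v \in F -> w \in F -> F \in extensions e [set v; w] (cnbr e w).
Proof.
move=> mF vF wF; have [_ dF _] := iffLR (maxdissocP _ _ _) mF.
apply: mem_extensions => //.
- by rewrite subUset !sub1set vF wF.
- rewrite [[set v; w]]setUC.
  apply: subset_trans (dissoc_edge_closed e_sym dF wF vF leaf_edge).
  by rewrite setIS // subsetUl.
- by rewrite subUset !sub1set cnbr_self !inE leaf_edge orbT.
- move=> b; rewrite !inE => /orP[]/eqP->; last exact: subsetUr.
  by rewrite leaf sub1set cnbr_self.
Qed.

Lemma branch_hub_edge (F : {set T}) (u : T) : maxdissoc e setT F ->
  w \in F -> u \in F -> e w u ->
  F \in extensions e [set w; u] (cnbr e w :|: cnbr e u).
Proof.
move=> mF wF uF ewu; have [_ dF _] := iffLR (maxdissocP _ _ _) mF.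
apply: mem_extensions => //.
- by rewrite subUset !sub1set wF uF.
- exact: dissoc_edge_closed.
- by rewrite subUset !sub1set !inE !eqxx !orbT.
- move=> b; rewrite !inE => /orP[]/eqP->; apply: subset_trans (subsetUr _ _) _.
    exact: subsetUl.
  exact: subsetUr.
Qed.

Lemma branch_leaf (F : {set T}) : maxdissoc e setT F ->
  v \in F -> w \notin F -> F \in extensions e [set v] [set v; w].
Proof.
move=> mF vF wF; apply: mem_extensions => //.
- by rewrite sub1set.
- apply/subsetP => x; rewrite !inE => /andP[xF /orP[//|/eqP xw]].
  by move: wF; rewrite -xw xF.
- by rewrite sub1set !inE eqxx.
- by move=> b; rewrite inE => /eqP->; rewrite leaf subsetUr.
Qed.

Lemma leaf_cover :
  [set F | maxdissoc e setT F] \subset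
    (\bigcup_(u in nbr e w :\ v) extensions e [set w; u] (cnbr e w :|: cnbr e u))
    :|: extensions e [set v] [set v; w] :|: extensions e [set v; w] (cnbr e w).
Proof.
apply/subsetP => F; rewrite inE => mF; rewrite !inE.
case: (boolP (v \in F)) => vF; case: (boolP (w \in F)) => wF.
- by rewrite branch_leaf_edge ?orbT.
- by rewrite branch_leaf ?orbT.
- have [_ [u uF ewu]] := leaf_excluded mF vF.
  apply/orP; left; apply/orP; left; apply/bigcupP; exists u.
    by rewrite !inE ewu andbT; apply: contraNneq vF => <-.
  exact: branch_hub_edge.
- by have [] := leaf_excluded mF vF; rewrite (negbTE wF).
Qed.

End LeafBranching.

Theorem lemma2p3 (T : finType) (e : rel T) (e_sym : symmetric e)
  (e_irr : irreflexive e) (v w : T) (hv : nbr e v = [set w]) :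
  phi e [set: T] <=
    \sum_(u in nbr e w :\ v) phi e (~: (cnbr e w :|: cnbr e u))
    + phi e (~: [set v; w]) + phi e (~: cnbr e w).
Proof.
apply: leq_trans (subset_leq_card (leaf_cover e_sym e_irr hv)) _.
apply: leq_trans (leq_card_setU _ _).1 _.
rewrite leq_add ?card_extensions //.
apply: leq_trans (leq_card_setU _ _).1 _.
rewrite leq_add ?card_extensions //.
apply: leq_trans (card_bigcup_le _ _) _.
by apply: leq_sum => u _; exact: card_extensions.
Qed.
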